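(* Let $\mathbb{Y}=\sum_{(i,j)\in D_{\mathbb{X}}}m_{ij}P_{ij}$ be an ACM fat point scheme in $\mathbb{P}^1\times\mathbb{P}^1$ over a field $K$ of characteristic zero, supported at $\mathbb{X}$, with coordinates chosen so that $x_0,y_0$ is a regular sequence in $R_{\mathbb{Y}}$, and let $\vartheta_{\mathbb{Y}}$ be its Kähler different. Then: (a) For all $(i,j)\in\mathbb{N}^2$, $\operatorname{HF}_{\vartheta_{\mathbb{Y}}}(i,j)\le\operatorname{HF}_{\vartheta_{\mathbb{Y}}}(i+1,j)$ and $\operatorname{HF}_{\vartheta_{\mathbb{Y}}}(i,j)\le\operatorname{HF}_{\vartheta_{\mathbb{Y}}}(i,j+1)$. (b) $\operatorname{HF}_{\vartheta_{\mathbb{Y}}}=0$ if and only if $m_{ij}\ge2$ for all $P_{ij}\in\mathbb{X}$. (c) If $s'$ is the number of points $P_{ij}\in\mathbb{X}$ with $m_{ij}=1$, then $\operatorname{HF}_{\vartheta_{\mathbb{Y}}}(i,j)=s'$ for all sufficiently large $i,j$.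
   Context: $S=K[X_0,X_1,Y_0,Y_1]$ with $\deg X_i=(1,0)$, $\deg Y_i=(0,1)$. For a finite set $\mathbb{X}$ of distinct $K$-rational points of $\mathbb{P}^1\times\mathbb{P}^1$, $P_{ij}=Q_i\times R_j$, $D_{\mathbb{X}}=\{(i,j)\mid P_{ij}\in\mathbb{X}\}$, $\wp_{ij}$ the vanishing ideal of $P_{ij}$; for $m_{ij}\ge1$, $I_{\mathbb{Y}}=\bigcap\wp_{ij}^{m_{ij}}$, $R_{\mathbb{Y}}=S/I_{\mathbb{Y}}$, $x_i,y_i$ the images of $X_i,Y_i$; $\mathbb{Y}$ is ACM if $R_{\mathbb{Y}}$ is Cohen–Macaulay (then after linear changes of coordinates in $\{X_0,X_1\}$ and in $\{Y_0,Y_1\}$ one may assume $x_0,y_0$ is a regular sequence). The Kähler different $\vartheta_{\mathbb{Y}}$ is the initial Fitting ideal of $\Omega^1_{R_{\mathbb{Y}}/K[x_0,y_0]}$: if $F_1,\dots,F_u$ are bihomogeneous generators of $I_{\mathbb{Y}}$, it is the bihomogeneous ideal of $R_{\mathbb{Y}}$ generated by the residue classes of the $2\times2$ minors $\frac{\partial F_a}{\partial X_1}\frac{\partial F_b}{\partial Y_1}-\frac{\partial F_b}{\partial X_1}\frac{\partial F_a}{\partial Y_1}$. $\operatorname{HF}_{\vartheta_{\mathbb{Y}}}(i,j)=\dim_K(\vartheta_{\mathbb{Y}})_{i,j}$. *)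

From mathcomp Require Import all_boot all_order all_algebra.
From mathcomp Require Import mpoly.
From Stdlib Require Import ClassicalEpsilon.

Set Implicit Arguments.
Unset Strict Implicit.
Unset Printing Implicit Defensive.

Import GRing.Theory.
Local Open Scope ring_scope.

Section Defs.
Variable K : fieldType.

Definition S := {mpoly K[4]}.
Definition vX0 : 'I_4 := inord 0.
Definition vX1 : 'I_4 := inord 1.
Definition vY0 : 'I_4 := inord 2.
Definition vY1 : 'I_4 := inord 3.
Definition X0 : S := 'X_vX0.
Definition X1 : S := 'X_vX1.
Definition Y0 : S := 'X_vY0.
Definition Y1 : S := 'X_vY1.

Definition bideg (mo : 'X_{1..4}) : nat * nat :=
  ((mo vX0 + mo vX1)%N, (mo vY0 + mo vY1)%N).

(* f is bihomogeneous of bidegree d (0 is bihomogeneous of every bidegree) *)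
Definition bihom (d : nat * nat) (f : S) : Prop :=
  forall mo, mo \in msupp f -> bideg mo = d.

Definition ideal_gen (gs : seq S) (f : S) : Prop :=
  exists cs : seq S, size cs = size gs /\
    f = \sum_(k < size gs) cs`_k * gs`_k.

(* A point Q = [a0 : a1] of P^1 is given by homogeneous coordinates (a0,a1).
   The linear form a1 X - a0 X' vanishes exactly at Q. *)
Definition lin_form (a : K * K) (U V : S) : S := a.2 *: U - a.1 *: V.

Definition wp_gens (q r : K * K) : seq S :=
  [:: lin_form q X0 X1; lin_form r Y0 Y1].

Definition wp_pow_gens (q r : K * K) (m : nat) : seq S :=
  [seq (lin_form q X0 X1) ^+ k * (lin_form r Y0 Y1) ^+ (m - k) | k <- iota 0 m.+1].

Definition in_wp_pow (q r : K * K) (m : nat) (f : S) : Prop :=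
  ideal_gen (wp_pow_gens q r m) f.

Definition in_IY (r t : nat) (Q : 'I_r -> K * K) (R : 'I_t -> K * K)
  (D : {set 'I_r * 'I_t}) (m : 'I_r -> 'I_t -> nat) (f : S) : Prop :=
  forall p, p \in D -> in_wp_pow (Q p.1) (R p.2) (m p.1 p.2) f.

(* distinct points of P^1, given by nonzero coordinate vectors
   that are pairwise non-proportional *)
Definition distinct_P1 (n : nat) (Q : 'I_n -> K * K) : Prop :=
  (forall i, Q i != (0, 0)) /\
  (forall i j, i != j -> (Q i).1 * (Q j).2 != (Q i).2 * (Q j).1).

(* x0, y0 (residue classes of X0, Y0) form a regular sequence in S / I,
   where I is given by the membership predicate inI *)
Definition regular_x0_y0 (inI : S -> Prop) : Prop :=
  (forall f : S, inI (X0 * f) -> inI f) /\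
  (forall f : S, (exists g h, Y0 * f = g + X0 * h /\ inI g) ->
                 (exists g h, f = g + X0 * h /\ inI g)) /\
  ~ (exists g h1 h2, 1 = g + X0 * h1 + Y0 * h2 /\ inI g).

Definition kahler_minors (F : seq S) : seq S :=
  [seq mderiv vX1 Fa * mderiv vY1 Fb - mderiv vX1 Fb * mderiv vY1 Fa
   | Fa <- F, Fb <- F].

(* membership in the preimage in S of the Kähler different:
   (minors) + I *)
Definition in_kahler_pre (inI : S -> Prop) (F : seq S) (f : S) : Prop :=
  exists g h, f = g + h /\ inI g /\ ideal_gen (kahler_minors F) h.

(* d is the K-dimension of (A_d + I_d) / I_d for a bidegree d, i.e. of the
   image of A_d in (S/I)_d : d is the maximal size of a family of
   bihomogeneous elements of A of bidegree dg that is K-linearly independent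
   modulo I *)
Definition indep_mod (inI : S -> Prop) (s : seq S) : Prop :=
  forall c : 'I_(size s) -> K,
    inI (\sum_(k < size s) c k *: s`_k) -> forall k, c k = 0.

Definition is_qdim (inA inI : S -> Prop) (dg : nat * nat) (n : nat) : Prop :=
  (exists s : seq S, size s = n /\ (forall f, f \in s -> inA f /\ bihom dg f)
                     /\ indep_mod inI s) /\
  (forall s : seq S, (forall f, f \in s -> inA f /\ bihom dg f) ->
                     indep_mod inI s -> (size s <= n)%N).

Definition qdim (inA inI : S -> Prop) (dg : nat * nat) : nat :=
  epsilon (inhabits 0%N) (is_qdim inA inI dg).

Definition HF_kahler (inI : S -> Prop) (F : seq S) (i j : nat) : nat :=
  qdim (in_kahler_pre inI F) inI (i, j).

End Defs.

(* Write wp_P = (linX q, linY r) for the ideal of a point P = (q, r), so that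
   I_Y is the intersection of the wp_P^(m_P).  Products of linear forms through
   the other points give for each P a separator, vanishing to order m_P' at every
   other point P' but not at P.  Regularity of x0, y0 forces x0(P), y0(P) <> 0:
   otherwise a separator times a power of a linear form would lie in I_Y although
   it vanishes to too low an order along a coordinate line.  Hence a
   bihomogeneous form vanishing at P lies in wp_P.  At a point with m >= 2 every
   Jacobian minor of I_Y lies in wp^(2m-2), inside wp^m; so an element of the
   Kahler different vanishing at the s' simple points lies in I_Y, and evaluation
   there embeds each graded piece of the different into K^s'.  At a simple point
   the minor of (linX U, linY U), U a separator, takes the value
   q0 r0 U(P)^2 <> 0, and shifting these elements by powers of x0 y0 makes the
   embedding onto in large bidegrees.  Multiplication by the nonzerodivisors x0
   and y0 gives the monotonicity. *)

From HB Require Import structures.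
From mathcomp Require Import all_boot all_order all_algebra.
From mathcomp Require Import mpoly.
From Stdlib Require Import ClassicalEpsilon.
From mathcomp Require Import zify ring.

Set Implicit Arguments.
Unset Strict Implicit.
Unset Printing Implicit Defensive.

Import GRing.Theory.
Local Open Scope ring_scope.

Section Ideals.
Variable K : fieldType.
Local Notation S := (S K).

Definition is_ideal (P : S -> Prop) : Prop :=
  [/\ P 0, forall f g, P f -> P g -> P (f + g) & forall a f, P f -> P (a * f)].

Section IdealTheory.
Variable P : S -> Prop.
Hypothesis idealP : is_ideal P.

Lemma ideal0 : P 0. Proof. by case: idealP. Qed.

Lemma idealD f g : P f -> P g -> P (f + g). Proof. by case: idealP => _ + _; apply. Qed.

Lemma idealMl a f : P f -> P (a * f). Proof. by case: idealP => _ _; apply. Qed.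

Lemma idealMr a f : P f -> P (f * a). Proof. by rewrite mulrC; apply: idealMl. Qed.

Lemma idealB f g : P f -> P g -> P (f - g).
Proof. by move=> Pf Pg; apply: idealD => //; rewrite -mulN1r; apply: idealMl. Qed.

Lemma idealZ c f : P f -> P (c *: f).
Proof. by rewrite -mul_mpolyC; apply: idealMl. Qed.

Lemma ideal_sum (I : Type) (s : seq I) (A : pred I) (G : I -> S) :
  (forall i, A i -> P (G i)) -> P (\sum_(i <- s | A i) G i).
Proof.
by move=> PG; elim/big_rec: _ => [|i g Ai Pg]; [apply: ideal0 | apply: idealD => //; apply: PG].
Qed.

Lemma is_ideal_colon x : is_ideal (fun g => P (x * g)).
Proof.
split=> [|f g Pf Pg|a f Pf]; first by rewrite mulr0; apply: ideal0.
  by rewrite mulrDr; apply: idealD.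
by rewrite mulrCA; apply: idealMl.
Qed.

Lemma idealMB x x' y y' : P (x - x') -> P (y - y') -> P (x * y - x' * y').
Proof.
move=> Px Py; have -> : x * y - x' * y' = (x - x') * y + x' * (y - y') by ring.
by apply: idealD; [apply: idealMr | apply: idealMl].
Qed.

Lemma idealXnB x y n : P (x - y) -> P (x ^+ n - y ^+ n).
Proof.
move=> Pxy; elim: n => [|n IHn]; first by rewrite !expr0 subrr; apply: ideal0.
by rewrite !exprS; apply: idealMB.
Qed.

End IdealTheory.

Lemma is_ideal_bigcap (T : Type) (A : T -> Prop) (Ps : T -> S -> Prop) :
  (forall i, A i -> is_ideal (Ps i)) -> is_ideal (fun f => forall i, A i -> Ps i f).
Proof.
move=> idealPs; split=> [i Ai|f g Pf Pg i Ai|a f Pf i Ai].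
- exact: ideal0 (idealPs i Ai).
- by apply: idealD (idealPs i Ai) _ _ (Pf i Ai) (Pg i Ai).
- by apply: idealMl (idealPs i Ai) _ _ (Pf i Ai).
Qed.

Lemma ideal_genP (gs : seq S) f :
  ideal_gen gs f <-> exists c : 'I_(size gs) -> S, f = \sum_(k < size gs) c k * gs`_k.
Proof.
split=> [[cs [_ ->]]|[c ->]]; first by exists (fun k => cs`_k).
exists [seq c k | k <- enum 'I_(size gs)]; rewrite size_map size_enum_ord; split=> //.
apply: eq_bigr => k _; rewrite (nth_map k) ?size_enum_ord //.
by congr (c _ * _); apply: val_inj; rewrite /= nth_enum_ord.
Qed.

Lemma ideal_gen_is_ideal (gs : seq S) : is_ideal (ideal_gen gs).
Proof.
split=> [|f g /ideal_genP[c ->] /ideal_genP[d ->]|a f /ideal_genP[c ->]]; apply/ideal_genP.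
- by exists (fun _ => 0); rewrite big1 // => k _; rewrite mul0r.
- by exists (fun k => c k + d k); rewrite -big_split; apply: eq_bigr => k _; rewrite mulrDl.
- by exists (fun k => a * c k); rewrite mulr_sumr; apply: eq_bigr => k _; rewrite mulrA.
Qed.

Lemma ideal_gen_mem (gs : seq S) g : g \in gs -> ideal_gen gs g.
Proof.
move=> gs_g; have lt_g : (index g gs < size gs)%N by rewrite index_mem.
apply/ideal_genP; exists (fun k => (k == Ordinal lt_g)%:R).
rewrite (bigD1 (Ordinal lt_g)) //= eqxx mul1r nth_index // big1 ?addr0 //.
by move=> k /negbTE->; rewrite mul0r.
Qed.

Lemma ideal_gen_min (gs : seq S) (P : S -> Prop) : is_ideal P ->
  (forall g, g \in gs -> P g) -> forall f, ideal_gen gs f -> P f.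
Proof.
move=> idealP Pgs f /ideal_genP[c ->]; apply: ideal_sum => // k _.
by apply: idealMl => //; apply/Pgs/mem_nth.
Qed.

End Ideals.

Section Bihomogeneous.
Variable K : fieldType.
Local Notation S := (S K).
Implicit Types (f g : S) (d e : nat * nat).

Lemma val_vX0 : vX0 = 0%N :> nat. Proof. exact: inordK. Qed.
Lemma val_vX1 : vX1 = 1%N :> nat. Proof. exact: inordK. Qed.
Lemma val_vY0 : vY0 = 2%N :> nat. Proof. exact: inordK. Qed.
Lemma val_vY1 : vY1 = 3%N :> nat. Proof. exact: inordK. Qed.
Definition val_vars := (val_vX0, val_vX1, val_vY0, val_vY1).

Lemma bihomP d f : bihom d f <-> forall mo, f@_mo != 0 -> bideg mo = d.
Proof. by split=> H mo; [rewrite -mcoeff_msupp | rewrite mcoeff_msupp]; apply: H. Qed.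

Lemma bihom0 d : bihom d (0 : S).
Proof. by apply/bihomP=> mo; rewrite mcoeff0 eqxx. Qed.

Lemma bihomD d f g : bihom d f -> bihom d g -> bihom d (f + g).
Proof.
move=> /bihomP homf /bihomP homg; apply/bihomP=> mo; rewrite mcoeffD.
by have [/eqP->|/homf//] := boolP (f@_mo == 0); rewrite add0r => /homg.
Qed.

Lemma bihomZ d c f : bihom d f -> bihom d (c *: f).
Proof.
move=> /bihomP homf; apply/bihomP=> mo; rewrite mcoeffZ.
by have [->|/homf//] := eqVneq f@_mo 0; rewrite mulr0 eqxx.
Qed.

Lemma bihomB d f g : bihom d f -> bihom d g -> bihom d (f - g).
Proof. by move=> homf homg; rewrite -scaleN1r; apply/bihomD/bihomZ. Qed.

Lemma bihom_sum d (I : Type) (s : seq I) (A : pred I) (G : I -> S) :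
  (forall i, A i -> bihom d (G i)) -> bihom d (\sum_(i <- s | A i) G i).
Proof.
by move=> homG; elim/big_rec: _ => [|i g Ai homg]; [apply: bihom0 | apply/bihomD/homg/homG].
Qed.

Lemma bidegD (m1 m2 : 'X_{1..4}) :
  bideg (m1 + m2)%MM = ((bideg m1).1 + (bideg m2).1, (bideg m1).2 + (bideg m2).2)%N.
Proof. by rewrite /bideg /= !mnmDE; congr pair; lia. Qed.

Lemma bihomM d1 d2 d f g : bihom d1 f -> bihom d2 g ->
  d = (d1.1 + d2.1, d1.2 + d2.2)%N -> bihom d (f * g).
Proof.
move=> homf homg -> mo /msuppM_le /allpairsP[[m1 m2] /= [f_m1 g_m2 ->]].
by rewrite bidegD (homf _ f_m1) (homg _ g_m2).
Qed.

Lemma bihom_monomial (mo : 'X_{1..4}) : bihom (bideg mo) ('X_[mo] : S).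
Proof. by move=> m; rewrite msuppX inE => /eqP->. Qed.

Lemma bihom1 : bihom (0, 0)%N (1 : S).
Proof. by rewrite -mpolyX0; have := @bihom_monomial 0%MM; rewrite /bideg !mnm0E. Qed.

Lemma bihomXn d f k : bihom d f -> bihom (k * d.1, k * d.2)%N (f ^+ k).
Proof.
move=> homf; elim: k => [|k IHk]; first by rewrite expr0 !mul0n; apply: bihom1.
by rewrite exprS; apply: bihomM homf IHk _; rewrite !mulSn.
Qed.

Lemma bideg_var (i : 'I_4) : bideg (U_(i) : 'X_{1..4}) =
  ((i == vX0) + (i == vX1), (i == vY0) + (i == vY1))%N.
Proof. by rewrite /bideg !mnm1E. Qed.

Lemma bihom_var (i : 'I_4) :
  bihom ((i == vX0) + (i == vX1), (i == vY0) + (i == vY1))%N ('X_i : S).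
Proof. by rewrite -bideg_var; apply: bihom_monomial. Qed.

Lemma bihomX0 : bihom (1, 0)%N (X0 K).
Proof. by have := bihom_var (i:=vX0); rewrite -!val_eqE /= !val_vars. Qed.
Lemma bihomX1 : bihom (1, 0)%N (X1 K).
Proof. by have := bihom_var (i:=vX1); rewrite -!val_eqE /= !val_vars. Qed.
Lemma bihomY0 : bihom (0, 1)%N (Y0 K).
Proof. by have := bihom_var (i:=vY0); rewrite -!val_eqE /= !val_vars. Qed.
Lemma bihomY1 : bihom (0, 1)%N (Y1 K).
Proof. by have := bihom_var (i:=vY1); rewrite -!val_eqE /= !val_vars. Qed.

Lemma bihom_mderiv_vX1 a b f : bihom (a, b) f -> bihom (a.-1, b) (mderiv vX1 f).
Proof.
move=> /bihomP homf; apply/bihomP=> mo; rewrite mcoeff_mderiv.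
have [->|/homf] := eqVneq f@_(mo + U_(vX1))%MM 0; first by rewrite mul0rn eqxx.
rewrite bidegD bideg_var -!val_eqE /= !val_vars /bideg /= => -[<- <-] _.
by congr pair; lia.
Qed.

Lemma bihom_mderiv_vY1 a b f : bihom (a, b) f -> bihom (a, b.-1) (mderiv vY1 f).
Proof.
move=> /bihomP homf; apply/bihomP=> mo; rewrite mcoeff_mderiv.
have [->|/homf] := eqVneq f@_(mo + U_(vY1))%MM 0; first by rewrite mul0rn eqxx.
rewrite bidegD bideg_var -!val_eqE /= !val_vars /bideg /= => -[<- <-] _.
by congr pair; lia.
Qed.

Definition minor f g : S := mderiv vX1 f * mderiv vY1 g - mderiv vX1 g * mderiv vY1 f.

Lemma bihom_minor a1 b1 a2 b2 f g : bihom (a1.+1, b1.+1) f -> bihom (a2.+1, b2.+1) g ->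
  bihom ((a1 + a2).+1, (b1 + b2).+1) (minor f g).
Proof.
move=> homf homg; apply: bihomB.
  by apply: bihomM (bihom_mderiv_vX1 homf) (bihom_mderiv_vY1 homg) _; rewrite /=; congr pair; lia.
by apply: bihomM (bihom_mderiv_vX1 homg) (bihom_mderiv_vY1 homf) _; rewrite /=; congr pair; lia.
Qed.

End Bihomogeneous.

Arguments bihomX0 {K}.
Arguments bihomY0 {K}.

Section BihomogeneousParts.
Variable K : fieldType.
Local Notation S := (S K).
Implicit Types (f g : S) (d e : nat * nat).

Definition bihom_part d f : S :=
  \sum_(mo <- msupp f) (if bideg mo == d then f@_mo else 0) *: 'X_[mo].

Lemma mcoeff_bihom_part d f mo :
  (bihom_part d f)@_mo = if bideg mo == d then f@_mo else 0.
Proof.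
rewrite raddf_sum /=; under eq_bigr do rewrite mcoeffZ mcoeffX.
have [f_mo|f'_mo] := boolP (mo \in msupp f); last first.
  rewrite (memN_msupp_eq0 f'_mo) if_same big1_seq // => mo' /= f_mo'.
  by case: (mo' =P mo) f_mo' => [->|_ _]; rewrite ?(negbTE f'_mo) ?mulr0.
rewrite (bigD1_seq mo) ?msupp_uniq //= eqxx mulr1 big1 ?addr0 //.
by move=> mo' /negbTE->; rewrite mulr0.
Qed.

Lemma bihom_part_is_linear d : linear (bihom_part d).
Proof.
move=> c f g; apply/mpolyP=> mo.
by rewrite mcoeffD mcoeffZ !mcoeff_bihom_part mcoeffD mcoeffZ; case: ifP; rewrite ?mulr0 ?addr0.
Qed.

HB.instance Definition _ d :=
  GRing.isLinear.Build K S S *:%R (bihom_part d) (bihom_part_is_linear d).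

Lemma bihom_part_bihom d f : bihom d (bihom_part d f).
Proof.
by apply/bihomP=> mo; rewrite mcoeff_bihom_part; case: (bideg mo =P d) => // _; rewrite eqxx.
Qed.

Lemma bihom_partE d e f : bihom e f -> bihom_part d f = if e == d then f else 0.
Proof.
move=> /bihomP homf; apply/mpolyP=> mo; rewrite mcoeff_bihom_part.
have [f_mo|/negPn/eqP f0] := boolP (f@_mo != 0).
  by rewrite (homf _ f_mo); case: ifP; rewrite ?mcoeff0.
by rewrite f0 if_same; case: ifP; rewrite ?mcoeff0.
Qed.

Lemma bihom_partMr d e c g : bihom e g ->
  bihom_part d (c * g) =
  (if (e.1 <= d.1)%N && (e.2 <= d.2)%N then bihom_part (d.1 - e.1, d.2 - e.2)%N c else 0) * g.
Proof.
move=> homg; rewrite {1}(mpolyE c) mulr_suml raddf_sum /=.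
under eq_bigr => mo _ do rewrite -scalerAl linearZ /=
  (bihom_partE _ (bihomM (bihom_monomial (mo:=mo)) homg erefl)).
have degE (mo : 'X_{1..4}) : ((bideg mo).1 + e.1, (bideg mo).2 + e.2)%N == d =
    ((e.1 <= d.1)%N && (e.2 <= d.2)%N) && (bideg mo == (d.1 - e.1, d.2 - e.2)%N).
  by case: (bideg mo) d => a b [d1 d2]; rewrite !xpair_eqE /=; apply/idP/idP; lia.
case: ifP => le_ed; last first.
  by rewrite mul0r big1 // => mo _; rewrite degE le_ed scaler0.
rewrite [in RHS](mpolyE c) raddf_sum mulr_suml; apply: eq_bigr => mo _ /=.
rewrite linearZ /= (bihom_partE _ (bihom_monomial (mo:=mo))) -scalerAl degE le_ed.
by rewrite /=; case: ifP; rewrite ?mul0r.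
Qed.

Lemma ideal_gen_bihom_part (gs : seq S) d f :
  (forall g, g \in gs -> exists e, bihom e g) -> ideal_gen gs f -> ideal_gen gs (bihom_part d f).
Proof.
move=> homgs /ideal_genP[c ->]; rewrite raddf_sum /=.
apply: (ideal_sum (ideal_gen_is_ideal gs)) => k _.
have gs_k : gs`_k \in gs by apply: mem_nth.
have [e home] := homgs _ gs_k; rewrite (bihom_partMr _ _ home).
exact/(idealMl (ideal_gen_is_ideal gs))/ideal_gen_mem.
Qed.

End BihomogeneousParts.

Section PointIdeals.
Variable K : fieldType.
Local Notation S := (S K).
Implicit Types (q r : K * K) (f g : S).

Definition linX q : S := lin_form q (X0 K) (X1 K).
Definition linY r : S := lin_form r (Y0 K) (Y1 K).
Definition coords q r : 'I_4 -> K := fun i => nth 0 [:: q.1; q.2; r.1; r.2] i.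

Lemma coords_vX0 q r : coords q r vX0 = q.1. Proof. by rewrite /coords val_vX0. Qed.
Lemma coords_vX1 q r : coords q r vX1 = q.2. Proof. by rewrite /coords val_vX1. Qed.
Lemma coords_vY0 q r : coords q r vY0 = r.1. Proof. by rewrite /coords val_vY0. Qed.
Lemma coords_vY1 q r : coords q r vY1 = r.2. Proof. by rewrite /coords val_vY1. Qed.
Definition coordsE := (coords_vX0, coords_vX1, coords_vY0, coords_vY1).

Lemma meval_X0 q r : (X0 K).@[coords q r] = q.1. Proof. by rewrite mevalXU coordsE. Qed.
Lemma meval_X1 q r : (X1 K).@[coords q r] = q.2. Proof. by rewrite mevalXU coordsE. Qed.
Lemma meval_Y0 q r : (Y0 K).@[coords q r] = r.1. Proof. by rewrite mevalXU coordsE. Qed.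
Lemma meval_Y1 q r : (Y1 K).@[coords q r] = r.2. Proof. by rewrite mevalXU coordsE. Qed.

Lemma meval_linX q' q r : (linX q').@[coords q r] = q'.2 * q.1 - q'.1 * q.2.
Proof. by rewrite mevalB !mevalZ meval_X0 meval_X1. Qed.
Lemma meval_linY r' q r : (linY r').@[coords q r] = r'.2 * r.1 - r'.1 * r.2.
Proof. by rewrite mevalB !mevalZ meval_Y0 meval_Y1. Qed.

Lemma bihom_linX q : bihom (1, 0)%N (linX q).
Proof. by apply: bihomB; apply: bihomZ; [apply: bihomX0 | apply: bihomX1]. Qed.
Lemma bihom_linY r : bihom (0, 1)%N (linY r).
Proof. by apply: bihomB; apply: bihomZ; [apply: bihomY0 | apply: bihomY1]. Qed.

Lemma bihom_linXY q r k l : bihom (k, l) (linX q ^+ k * linY r ^+ l).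
Proof.
apply: bihomM (bihomXn (bihom_linX (q:=q))) (bihomXn (bihom_linY (r:=r))) _.
by rewrite /= !muln0 !muln1 addn0.
Qed.

Lemma mderiv_var (i j : 'I_4) : mderiv i ('X_j : S) = (i == j)%:R.
Proof.
rewrite mderivX mnm1E eq_sym; case: eqP => [->|_]; last by rewrite scale0r.
have -> : (U_(j) - U_(j))%MM = 0%MM by apply/mnmP => k; rewrite mnmBE mnm0E subnn.
by rewrite mpolyX0 scale1r.
Qed.

Lemma mderivXn (i : 'I_4) f n : mderiv i (f ^+ n) = n%:R * f ^+ n.-1 * mderiv i f.
Proof.
elim: n => [|n IHn]; first by rewrite expr0 -mpolyC1 mderivC !mul0r.
rewrite exprS mderivM IHn; case: n {IHn} => [|n] /=.
  by rewrite !mul0r mulr0 addr0 !mul1r expr0 mulr1.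
by rewrite exprS -[n.+2]addn1 natrD; ring.
Qed.

Lemma mderiv_linX_X1 q : mderiv vX1 (linX q) = - q.1%:MP.
Proof.
by rewrite mderivB !mderivZ !mderiv_var -!val_eqE /= !val_vars /= scaler0 sub0r alg_mpolyC.
Qed.
Lemma mderiv_linX_Y1 q : mderiv vY1 (linX q) = 0.
Proof. by rewrite mderivB !mderivZ !mderiv_var -!val_eqE /= !val_vars /= !scaler0 subr0. Qed.
Lemma mderiv_linY_X1 r : mderiv vX1 (linY r) = 0.
Proof. by rewrite mderivB !mderivZ !mderiv_var -!val_eqE /= !val_vars /= !scaler0 subr0. Qed.
Lemma mderiv_linY_Y1 r : mderiv vY1 (linY r) = - r.1%:MP.
Proof.
by rewrite mderivB !mderivZ !mderiv_var -!val_eqE /= !val_vars /= scaler0 sub0r alg_mpolyC.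
Qed.

Lemma meval_minor_lin q r U :
  (minor (linX q * U) (linY r * U)).@[coords q r] = q.1 * r.1 * U.@[coords q r] ^+ 2.
Proof.
have linX0 : (linX q).@[coords q r] = 0 by rewrite meval_linX mulrC subrr.
have linY0 : (linY r).@[coords q r] = 0 by rewrite meval_linY mulrC subrr.
rewrite /minor !mderivM mderiv_linX_X1 mderiv_linX_Y1 mderiv_linY_X1 mderiv_linY_Y1.
by rewrite mevalB !mevalM !mevalD !mevalM !mevalN !mevalC linX0 linY0; ring.
Qed.

Lemma wp_pow_is_ideal q r m : is_ideal (in_wp_pow q r m).
Proof. exact: ideal_gen_is_ideal. Qed.

Lemma wp_pow_gensP q r m g :
  reflect (exists2 k, (k <= m)%N & g = linX q ^+ k * linY r ^+ (m - k)) (g \in wp_pow_gens q r m).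
Proof.
apply: (iffP mapP) => [[k]|[k le_km ->]]; last by exists k; rewrite // mem_iota add0n ltnS.
by rewrite mem_iota add0n ltnS => /andP[_ le_km] ->; exists k.
Qed.

Lemma wp_pow_min (P : S -> Prop) q r m : is_ideal P ->
  (forall k, (k <= m)%N -> P (linX q ^+ k * linY r ^+ (m - k))) ->
  forall f, in_wp_pow q r m f -> P f.
Proof. by move=> idealP Pgens; apply: ideal_gen_min => // g /wp_pow_gensP[k /Pgens Pg ->]. Qed.

Lemma wp_pow_monomial q r m a b : (m <= a + b)%N -> in_wp_pow q r m (linX q ^+ a * linY r ^+ b).
Proof.
have idealW := wp_pow_is_ideal q r m.
have gen k : (k <= m)%N -> in_wp_pow q r m (linX q ^+ k * linY r ^+ (m - k)).
  by move=> le_km; apply/ideal_gen_mem/wp_pow_gensP; exists k.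
move=> le_m_ab; have [le_ma|lt_am] := leqP m a.
  rewrite -(subnKC le_ma) exprD -mulrA; apply: (idealMr idealW).
  by have := gen m (leqnn m); rewrite subnn expr0 mulr1.
rewrite -(subnKC (_ : m - a <= b)%N); last by lia.
by rewrite exprD mulrA; apply/(idealMr idealW)/gen/ltnW.
Qed.

Lemma wp_powM q r a b f g :
  in_wp_pow q r a f -> in_wp_pow q r b g -> in_wp_pow q r (a + b) (f * g).
Proof.
have colon h := is_ideal_colon (wp_pow_is_ideal q r (a + b)) h.
move=> Wf; apply: wp_pow_min (colon f) _ g => l le_lb.
rewrite mulrC; apply: wp_pow_min (colon _) _ f Wf => k le_ka.
rewrite mulrACA -!exprD; apply: wp_pow_monomial; lia.
Qed.

Lemma wp_pow_le q r m n f : (n <= m)%N -> in_wp_pow q r m f -> in_wp_pow q r n f.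
Proof.
move=> le_nm; apply: (wp_pow_min (wp_pow_is_ideal q r n)) => k le_km.
by apply: wp_pow_monomial; lia.
Qed.

Lemma wp_pow_mderiv q r m i f : in_wp_pow q r m f -> in_wp_pow q r m.-1 (mderiv i f).
Proof.
have idealW := wp_pow_is_ideal q r m.-1.
move=> /ideal_genP[c ->]; elim/big_rec: _ => [|k g _ Wg].
  by rewrite mderiv0; apply: (ideal0 idealW).
rewrite mderivD; apply: (idealD idealW) Wg.
have /wp_pow_gensP[l le_lm ->] := mem_nth 0 (ltn_ord k).
rewrite mderivM; apply: (idealD idealW); first by apply/(idealMl idealW)/wp_pow_monomial; lia.
apply: (idealMl idealW); rewrite mderivM !mderivXn; apply: (idealD idealW).
  case: l le_lm => [|l] le_lm; first by rewrite !mul0r; apply: (ideal0 idealW).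
  rewrite mulrAC; apply: (idealMr idealW); rewrite -mulrA.
  by apply/(idealMl idealW)/wp_pow_monomial; lia.
case E: (m - l)%N => [|n]; first by rewrite !mul0r mulr0; apply: (ideal0 idealW).
rewrite mulrA; apply: (idealMr idealW); rewrite mulrCA.
by apply/(idealMl idealW)/wp_pow_monomial; lia.
Qed.

Lemma wp_pow_meval q r m f : (0 < m)%N -> in_wp_pow q r m f -> f.@[coords q r] = 0.
Proof.
move=> m_gt0; apply: (wp_pow_min (P := fun g => g.@[coords q r] = 0)) => [|k le_km].
  split=> [|f1 g1 f0 g0|a f1 f0]; by rewrite ?meval0 ?mevalD ?mevalM ?f0 ?g0 ?addr0 ?mulr0.
rewrite mevalM !rmorphXn /= meval_linX meval_linY !(mulrC _.1) !subrr !expr0n.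
by case: k le_km => [|k] /= le_km; rewrite ?mul0r // subn0 mul1r; case: m m_gt0 le_km.
Qed.

Lemma monomial_vars (mo : 'X_{1..4}) :
  'X_[mo] = X0 K ^+ mo vX0 * X1 K ^+ mo vX1 * Y0 K ^+ mo vY0 * Y1 K ^+ mo vY1.
Proof.
rewrite mpolyXE_id !big_ord_recr big_ord0 /= mul1r.
by congr (_ * _ * _ * _); congr ('X__ ^+ mo _); apply: val_inj; rewrite /= val_vars.
Qed.

(* Modulo wp, q.1 X1 = q.2 X0 and r.1 Y1 = r.2 Y0, so a form of bidegree (i, j)
   times q.1^i r.1^j is congruent to its value at (q, r) times X0^i Y0^j. *)
Definition value_defect q r i j f : S :=
  (q.1 ^+ i * r.1 ^+ j) *: f - f.@[coords q r] *: (X0 K ^+ i * Y0 K ^+ j).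

Lemma wp1_value_defect_monomial q r (mo : 'X_{1..4}) :
  in_wp_pow q r 1 (value_defect q r (bideg mo).1 (bideg mo).2 'X_[mo]).
Proof.
have idealW := wp_pow_is_ideal q r 1.
have W_linX : in_wp_pow q r 1 (q.1 *: X1 K - q.2 *: X0 K).
  rewrite -opprB -scaleN1r; apply/(idealZ idealW).
  by have := wp_pow_monomial q r (a:=1) (b:=0) (leqnn 1); rewrite expr1 expr0 mulr1.
have W_linY : in_wp_pow q r 1 (r.1 *: Y1 K - r.2 *: Y0 K).
  rewrite -opprB -scaleN1r; apply/(idealZ idealW).
  by have := wp_pow_monomial q r (a:=0) (b:=1) (leqnn 1); rewrite expr1 expr0 mul1r.
rewrite /value_defect /bideg /= monomial_vars !mevalM !rmorphXn /=.
rewrite meval_X0 meval_X1 meval_Y0 meval_Y1.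
move: (mo vX0) (mo vX1) (mo vY0) (mo vY1) => a b c d.
have -> : (q.1 ^+ (a + b) * r.1 ^+ (c + d)) *: (X0 K ^+ a * X1 K ^+ b * Y0 K ^+ c * Y1 K ^+ d)
   - (q.1 ^+ a * q.2 ^+ b * r.1 ^+ c * r.2 ^+ d) *: (X0 K ^+ (a + b) * Y0 K ^+ (c + d))
   = (q.1 ^+ a * r.1 ^+ c) *: (X0 K ^+ a * Y0 K ^+ c) *
     ((q.1 *: X1 K) ^+ b * (r.1 *: Y1 K) ^+ d - (q.2 *: X0 K) ^+ b * (r.2 *: Y0 K) ^+ d).
  rewrite -!mul_mpolyC !exprMn !exprD !rmorphM !rmorphXn /=; ring.
by apply/(idealMl idealW)/(idealMB idealW); apply: (idealXnB idealW).
Qed.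

Lemma wp1_value_defect q r i j f : bihom (i, j) f -> in_wp_pow q r 1 (value_defect q r i j f).
Proof.
move=> homf; have idealW := wp_pow_is_ideal q r 1.
have -> : value_defect q r i j f =
    \sum_(mo <- msupp f) f@_mo *: value_defect q r i j 'X_[mo].
  rewrite /value_defect {1 2}(mpolyE f) scaler_sumr raddf_sum scaler_suml -sumrB.
  by apply: eq_bigr => mo _ /=; rewrite mevalZ scalerBr !scalerA mulrC.
rewrite big_seq; apply: (ideal_sum idealW) => mo /homf mo_ij.
apply: (idealZ idealW).
by case: (bideg mo) mo_ij (wp1_value_defect_monomial q r mo) => _ _ [-> ->].
Qed.

Lemma wp1_of_meval_eq0 q r i j f : q.1 != 0 -> r.1 != 0 -> bihom (i, j) f ->
  f.@[coords q r] = 0 -> in_wp_pow q r 1 f.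
Proof.
move=> q1_neq0 r1_neq0 homf f_P0; have := wp1_value_defect q r homf.
rewrite /value_defect f_P0 scale0r subr0 => W_cf.
have c_neq0 : q.1 ^+ i * r.1 ^+ j != 0 by rewrite mulf_neq0 // expf_neq0.
by rewrite -[f]scale1r -(mulVf c_neq0) -scalerA; apply: idealZ W_cf; apply: wp_pow_is_ideal.
Qed.

End PointIdeals.

Arguments bihom_linX {K q}.
Arguments bihom_linY {K r}.

Section QuotientDimension.
Variable K : fieldType.
Local Notation S := (S K).
Variables (inA inI : S -> Prop) (dg : nat * nat).

Definition admissible (s : seq S) : Prop :=
  (forall f, f \in s -> inA f /\ bihom dg f) /\ indep_mod inI s.

Lemma is_qdimP n : is_qdim inA inI dg n <->
  (exists2 s, size s = n & admissible s) /\ forall s, admissible s -> (size s <= n)%N.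
Proof.
rewrite /is_qdim /admissible; split=> [[[s [? [? ?]]] ub]|[[s ? [? ?]] ub]].
  by split=> [|s' [? ?]]; [exists s | apply: ub].
by split=> [|s' ? ?]; [exists s | apply: ub].
Qed.

Lemma qdim_eq n : is_qdim inA inI dg n -> qdim inA inI dg = n.
Proof.
move=> qdim_n; have /is_qdimP[[s1 <- adm1] ub1] := qdim_n.
have /is_qdimP[[s2 <- adm2] ub2] : is_qdim inA inI dg (qdim inA inI dg).
  by apply: epsilon_spec; exists n.
by apply/eqP; rewrite eqn_leq (ub1 _ adm2) (ub2 _ adm1).
Qed.

Lemma is_qdim_exists B : (forall s, admissible s -> (size s <= B)%N) ->
  exists n, is_qdim inA inI dg n.
Proof.
move=> ubB; pose Pn n := exists2 s, size s = n & admissible s.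
pose sizes n : bool := if excluded_middle_informative (Pn n) then true else false.
have sizesP n : sizes n <-> Pn n by rewrite /sizes; case: excluded_middle_informative.
have sizes0 : exists n, sizes n.
  by exists 0%N; apply/sizesP; exists [::] => //; split=> // c _ [].
have ub n : sizes n -> (n <= B)%N by move=> /sizesP[s <-]; apply: ubB.
have [n /sizesP Pn_n max_n] := ex_maxnP sizes0 ub.
by exists n; apply/is_qdimP; split=> // s adm; apply: max_n; apply/sizesP; exists s.
Qed.

End QuotientDimension.

Lemma indep_mod_mull (K : fieldType) (inI : S K -> Prop) d (x : S K) (s : seq (S K)) :
  (forall f, bihom d f -> inI (x * f) -> inI f) -> (forall f, f \in s -> bihom d f) ->
  indep_mod inI s -> indep_mod inI [seq x * f | f <- s].
Proof.
move=> x_reg hom_s indep_s; rewrite /indep_mod size_map => c Ixs.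
apply: indep_s; apply: x_reg.
  by apply: bihom_sum => k _; apply/bihomZ/hom_s/mem_nth.
rewrite mulr_sumr; congr inI: Ixs; apply: eq_bigr => k _.
by rewrite (nth_map 0) // scalerAr.
Qed.

Lemma sum_mul_minor (R : comPzRingType) n (c d X Y : 'I_n -> R) :
  (\sum_a c a * X a) * (\sum_b d b * Y b) - (\sum_b d b * X b) * (\sum_a c a * Y a) =
  \sum_a \sum_b c a * d b * (X a * Y b - X b * Y a).
Proof.
rewrite [X in _ - X]mulrC !mulr_suml -sumrB; apply: eq_bigr => a _.
by rewrite !mulr_sumr -sumrB; apply: eq_bigr => b _; ring.
Qed.

Lemma indep_mod_dual (K : fieldType) (inI : S K -> Prop) (s : seq (S K))
    (v : nat -> 'I_4 -> K) :
  (forall k f, (k < size s)%N -> inI f -> f.@[v k] = 0) ->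
  (forall k l, (k < size s)%N -> (l < size s)%N -> ((s`_l).@[v k] != 0) = (k == l)) ->
  indep_mod inI s.
Proof.
move=> inI_v dual c Ic k; have /eqP := inI_v _ _ (ltn_ord k) Ic.
rewrite raddf_sum (bigD1 k) //= big1 => [|l neq_lk]; last first.
  have := dual k l (ltn_ord k) (ltn_ord l).
  rewrite val_eqE [k == l]eq_sym (negbTE neq_lk) => /negbFE/eqP s_l0.
  by rewrite mevalZ s_l0 mulr0.
have := dual k k (ltn_ord k) (ltn_ord k); rewrite eqxx => s_k_neq0.
by rewrite addr0 mevalZ mulf_eq0 (negbTE s_k_neq0) orbF => /eqP.
Qed.

Section FatPoints.
Variable K : fieldType.
Local Notation S := (S K).
Variables (r t : nat) (Q : 'I_r -> K * K) (R : 'I_t -> K * K).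
Variables (D : {set 'I_r * 'I_t}) (m : 'I_r -> 'I_t -> nat).
Hypotheses (distinctQ : distinct_P1 Q) (distinctR : distinct_P1 R).
Hypothesis m_gt0 : forall p, p \in D -> (0 < m p.1 p.2)%N.
Hypothesis regular : regular_x0_y0 (in_IY Q R D m).

Local Notation I := (in_IY Q R D m).
Local Notation pt p := (coords (Q p.1) (R p.2)).
Local Notation mult p := (m p.1 p.2).
Local Notation wp p := (in_wp_pow (Q p.1) (R p.2) (mult p)).

Lemma IY_is_ideal : is_ideal I.
Proof. by apply: is_ideal_bigcap => p _; apply: wp_pow_is_ideal. Qed.

Lemma IY_meval p f : p \in D -> I f -> f.@[pt p] = 0.
Proof. by move=> Dp If; apply: wp_pow_meval (m_gt0 Dp) (If p Dp). Qed.

Lemma IY_bihom_part d f : I f -> I (bihom_part d f).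
Proof.
move=> If p Dp; apply: ideal_gen_bihom_part (If p Dp) => g /wp_pow_gensP[k _ ->].
by exists (k, mult p - k)%N; apply: bihom_linXY.
Qed.

Lemma IY_mod_X0_decomp i j f : bihom (i, j) f -> I (Y0 K * f) ->
  exists2 g, I g & exists h,
    f = bihom_part (i, j) g + (if i is i'.+1 then bihom_part (i', j) h else 0) * X0 K.
Proof.
case: regular => _ [y0_reg _] homf Iy0f.
have [g [h [fE Ig]]] : exists g h, f = g + X0 K * h /\ I g.
  by apply: y0_reg; exists (Y0 K * f), 0; rewrite mulr0 addr0.
exists g => //; exists h.
have -> : f = bihom_part (i, j) f by rewrite (bihom_partE _ homf) eqxx.
rewrite fE raddfD /=.
rewrite mulrC (bihom_partMr _ _ bihomX0) /=.
by case: i {homf fE Iy0f} => [|i]; rewrite ?subn0 ?subn1.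
Qed.

Lemma Y0_regular_bihom i j f : bihom (i, j) f -> I (Y0 K * f) -> I f.
Proof.
case: regular => x0_reg _; have idealI := IY_is_ideal.
elim: i f => [|i IHi] f homf Iy0f; have [g Ig [h fE]] := IY_mod_X0_decomp homf Iy0f.
  by rewrite fE mul0r addr0; apply: IY_bihom_part.
rewrite fE; apply: (idealD idealI); first exact: IY_bihom_part.
apply: (idealMr idealI); apply: IHi; first exact: bihom_part_bihom.
apply: x0_reg; rewrite mulrCA.
have -> : Y0 K * (X0 K * bihom_part (i, j) h) = Y0 K * f - Y0 K * bihom_part (i.+1, j) g.
  by rewrite fE; ring.
by apply: (idealB idealI) => //; apply/(idealMl idealI)/IY_bihom_part.
Qed.

Definition sep_form (p' p : 'I_r * 'I_t) : S :=
  if p'.1 != p.1 then linX (Q p'.1) else linY (R p'.2).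

Definition separator p : S := \prod_(p' in D | p' != p) sep_form p' p ^+ mult p'.

Lemma wp_sep_formXn p' p k : in_wp_pow (Q p'.1) (R p'.2) k (sep_form p' p ^+ k).
Proof.
rewrite /sep_form; case: ifP => _.
  by rewrite -[_ ^+ k]mulr1 -(expr0 (linY (R p'.2))); apply: wp_pow_monomial; rewrite addn0.
by rewrite -[_ ^+ k]mul1r -(expr0 (linX (Q p'.1))); apply: wp_pow_monomial.
Qed.

Lemma sep_form_meval_neq0 p' p : p' != p -> (sep_form p' p).@[pt p] != 0.
Proof.
rewrite /sep_form; case: ifPn => [neq1 _|/negbNE/eqP eq1 neq].
  by rewrite meval_linX subr_eq0 eq_sym; apply: distinctQ.2.
have neq2 : p'.2 != p.2.
  by apply: contraNneq neq => eq2; rewrite [p']surjective_pairing eq1 eq2 -surjective_pairing.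
by rewrite meval_linY subr_eq0 eq_sym; apply: distinctR.2.
Qed.

Lemma separator_meval_neq0 p : (separator p).@[pt p] != 0.
Proof.
rewrite rmorph_prod /=; apply/prodf_neq0 => p' /andP[_ neq].
by rewrite rmorphXn /= expf_neq0 // sep_form_meval_neq0.
Qed.

Lemma wp_separator p p' : p' \in D -> p' != p -> wp p' (separator p).
Proof.
move=> Dp' neq; rewrite /separator (bigD1 p') /=; last by rewrite Dp' neq.
by apply: (idealMr (wp_pow_is_ideal _ _ _)); apply: wp_sep_formXn.
Qed.

Lemma separator_meval_eq0 p p' : p' \in D -> p' != p -> (separator p).@[pt p'] = 0.
Proof. by move=> Dp' neq; apply: wp_pow_meval (m_gt0 Dp') (wp_separator Dp' neq). Qed.

Lemma bihom_separator p : exists d, bihom d (separator p).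
Proof.
apply: (big_ind (fun f : S => exists d, bihom d f)) => [|f g [d1 homf] [d2 homg]|p' _].
- by exists (0, 0)%N; apply: bihom1.
- by exists (d1.1 + d2.1, d1.2 + d2.2)%N; apply: bihomM homf homg _.
- rewrite /sep_form; case: ifP => _; eexists; apply/bihomXn.
    exact: bihom_linX.
  exact: bihom_linY.
Qed.

Lemma IY_separatorM p g : wp p g -> I (separator p * g).
Proof.
move=> Wg p' Dp'; have [->|neq] := eqVneq p' p.
  exact: (idealMl (wp_pow_is_ideal _ _ _)).
exact/(idealMr (wp_pow_is_ideal _ _ _))/wp_separator.
Qed.

Definition restrict_line p (v : 'I_4) (f : S) : {poly K} :=
  mmap (@polyC K) (fun i => if i == v then 'X else (pt p i)%:P) f.

Lemma restrict_line_var p v (i : 'I_4) :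
  restrict_line p v 'X_i = if i == v then 'X else (pt p i)%:P.
Proof. by rewrite /restrict_line mmapX mmap1U. Qed.

Lemma restrict_line_linX p v : v != vX0 -> v != vX1 -> restrict_line p v (linX (Q p.1)) = 0.
Proof.
rewrite eq_sym => /negbTE X0v; rewrite eq_sym => /negbTE X1v.
rewrite /restrict_line rmorphB /= !mmapZ !mmapX !mmap1U X0v X1v !coordsE.
by rewrite -!polyCM mulrC subrr.
Qed.

Lemma restrict_line_linY p v : v != vY0 -> v != vY1 -> restrict_line p v (linY (R p.2)) = 0.
Proof.
rewrite eq_sym => /negbTE Y0v; rewrite eq_sym => /negbTE Y1v.
rewrite /restrict_line rmorphB /= !mmapZ !mmapX !mmap1U Y0v Y1v !coordsE.
by rewrite -!polyCM mulrC subrr.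
Qed.

Lemma horner_restrict_line p v f : pt p v = 0 -> (restrict_line p v f).[0] = f.@[pt p].
Proof.
move=> pv0; rewrite /restrict_line /mmap mevalE horner_sum; apply: eq_bigr => mo _.
rewrite hornerCM /mmap1 horner_prod; congr (_ * _); apply: eq_bigr => i _.
by rewrite horner_exp; case: eqP => [->|_]; rewrite ?hornerX ?pv0 ?hornerC.
Qed.

Lemma Xn_dvd_restrict_line p v k g :
  'X %| restrict_line p v (linX (Q p.1)) -> 'X %| restrict_line p v (linY (R p.2)) ->
  in_wp_pow (Q p.1) (R p.2) k g -> 'X ^+ k %| restrict_line p v g.
Proof.
move=> dvdX dvdY.
apply: (wp_pow_min (P := fun g => 'X ^+ k %| restrict_line p v g)) => [|l le_lk].
  split=> [|f1 g1|a f1]; rewrite /restrict_line ?rmorph0 ?dvdp0 ?rmorphD ?rmorphM //.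
    exact: dvdp_add.
  exact: dvdp_mull.
rewrite /restrict_line rmorphM !rmorphXn /= -(subnKC le_lk) exprD subnKC //.
by apply: dvdp_mul; apply: dvdp_exp2r.
Qed.

(* On the line, linX and linY vanish at 0, so elements of wp_p^m vanish there to
   order at least m, whereas separator p * L^(m-1) vanishes to order m - 1. *)
Lemma separator_mul_pow_notin_IY p v (L : S) c : p \in D -> pt p v = 0 -> c != 0 ->
  restrict_line p v L = c%:P * 'X ->
  'X %| restrict_line p v (linX (Q p.1)) -> 'X %| restrict_line p v (linY (R p.2)) ->
  ~ I (separator p * L ^+ (mult p).-1).
Proof.
move=> Dp pv0 c_neq0 LE dvdX dvdY /(_ p Dp) /(Xn_dvd_restrict_line dvdX dvdY).
rewrite /restrict_line rmorphM rmorphXn /= -/(restrict_line p v L) -/(restrict_line p v _) LE.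
rewrite -(prednK (m_gt0 Dp)) /=; set n := (mult p).-1.
have -> : restrict_line p v (separator p) * (c%:P * 'X) ^+ n =
    'X ^+ n * ((c ^+ n)%:P * restrict_line p v (separator p)) by rewrite exprMn rmorphXn; ring.
rewrite exprSr dvdp_mul2l ?expf_neq0 ?polyX_eq0 //.
rewrite -[X in X %| _]subr0 -polyC0 -root_factor_theorem /root hornerM hornerC.
rewrite horner_restrict_line // mulf_eq0 expf_eq0 (negbTE c_neq0) andbF.
by rewrite (negbTE (separator_meval_neq0 p)).
Qed.

Lemma IY_mul_separator_pow p (L V : S) c : p \in D -> c != 0 -> L = c *: V ->
  wp p (L ^+ mult p) -> I (V * (separator p * L ^+ (mult p).-1)).
Proof.
move=> Dp c_neq0 LE WL.
have -> : V * (separator p * L ^+ (mult p).-1) = separator p * (c^-1 *: L ^+ mult p).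
  by rewrite -{2}(prednK (m_gt0 Dp)) exprS {2}LE -!scalerAl scalerA mulVf // scale1r; ring.
exact/IY_separatorM/(idealZ (wp_pow_is_ideal _ _ _)).
Qed.

Lemma pair_snd_neq0 (a : K * K) : a != (0, 0) -> a.1 = 0 -> a.2 != 0.
Proof. by case: a => x y /= a_neq0 x0; apply: contraNneq a_neq0 => ->; rewrite x0. Qed.

Lemma x0_coord_neq0 p : p \in D -> (Q p.1).1 != 0.
Proof.
move=> Dp; apply/negP => /eqP q1_0; have q2_neq0 := pair_snd_neq0 (distinctQ.1 p.1) q1_0.
have linXE : linX (Q p.1) = (Q p.1).2 *: X0 K by rewrite /linX /lin_form q1_0 scale0r subr0.
have X0E : restrict_line p vX0 (X0 K) = 'X by rewrite restrict_line_var eqxx.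
apply: (@separator_mul_pow_notin_IY p vX0 (linX (Q p.1)) (Q p.1).2) => //.
- by rewrite coordsE.
- by rewrite linXE /restrict_line mmapZ -/(restrict_line p vX0 (X0 K)) X0E.
- by rewrite linXE /restrict_line mmapZ -/(restrict_line p vX0 (X0 K)) X0E dvdp_mull.
- by rewrite restrict_line_linY ?dvdp0 // -val_eqE /= !val_vars.
apply: regular.1; apply: IY_mul_separator_pow linXE _ => //.
by rewrite -[_ ^+ _]mulr1 -(expr0 (linY (R p.2))); apply: wp_pow_monomial; rewrite addn0.
Qed.

Lemma y0_coord_neq0 p : p \in D -> (R p.2).1 != 0.
Proof.
move=> Dp; apply/negP => /eqP r1_0; have r2_neq0 := pair_snd_neq0 (distinctR.1 p.2) r1_0.
have linYE : linY (R p.2) = (R p.2).2 *: Y0 K by rewrite /linY /lin_form r1_0 scale0r subr0.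
have Y0E : restrict_line p vY0 (Y0 K) = 'X by rewrite restrict_line_var eqxx.
apply: (@separator_mul_pow_notin_IY p vY0 (linY (R p.2)) (R p.2).2) => //.
- by rewrite coordsE.
- by rewrite linYE /restrict_line mmapZ -/(restrict_line p vY0 (Y0 K)) Y0E.
- by rewrite restrict_line_linX ?dvdp0 // -val_eqE /= !val_vars.
- by rewrite linYE /restrict_line mmapZ -/(restrict_line p vY0 (Y0 K)) Y0E dvdp_mull.
have [d homW] := bihom_separator p.
apply: (@Y0_regular_bihom (d.1 + (mult p).-1 * 0) (d.2 + (mult p).-1 * 1)).
  exact: bihomM homW (bihomXn bihom_linY) erefl.
apply: IY_mul_separator_pow linYE _ => //.
by rewrite -[_ ^+ _]mul1r -(expr0 (linX (Q p.1))); apply: wp_pow_monomial.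
Qed.

Variable F : seq S.
Hypothesis F_gen : forall f, I f <-> ideal_gen F f.

Local Notation A := (in_kahler_pre I F).

Lemma kahler_is_ideal : is_ideal A.
Proof.
have idealI := IY_is_ideal; have idealM := ideal_gen_is_ideal (kahler_minors F).
split=> [|f g [f1 [f2 [-> [If1 Mf2]]]] [g1 [g2 [-> [Ig1 Mg2]]]]|a f [f1 [f2 [-> [If1 Mf2]]]]].
- by exists 0, 0; rewrite addr0; split=> //; split; apply: ideal0.
- exists (f1 + g1), (f2 + g2); rewrite addrACA; split=> //.
  by split; [apply: (idealD idealI) | apply: (idealD idealM)].
- exists (a * f1), (a * f2); rewrite mulrDr; split=> //.
  by split; [apply: (idealMl idealI) | apply: (idealMl idealM)].
Qed.

Lemma mderiv_IY f : I f -> exists c : 'I_(size F) -> S,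
  forall i, exists2 g, I g & mderiv i f = g + \sum_k c k * mderiv i F`_k.
Proof.
move=> /F_gen /ideal_genP[c ->]; exists c => i.
exists (\sum_k mderiv i (c k) * F`_k).
  apply/F_gen; apply: (ideal_sum (ideal_gen_is_ideal F)) => k _.
  exact/(idealMl (ideal_gen_is_ideal F))/ideal_gen_mem/mem_nth.
elim/big_rec3: _ => [|k g1 g2 g3 _ IH]; first by rewrite mderiv0 addr0.
by rewrite mderivD mderivM IH addrACA.
Qed.

Lemma kahler_minor f g : I f -> I g -> A (minor f g).
Proof.
move=> If Ig; have idealI := IY_is_ideal; have idealM := ideal_gen_is_ideal (kahler_minors F).
have [c dfE] := mderiv_IY If; have [d dgE] := mderiv_IY Ig.
have [[fx If_x fxE] [fy If_y fyE]] := (dfE vX1, dfE vY1).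
have [[gx Ig_x gxE] [gy Ig_y gyE]] := (dgE vX1, dgE vY1).
set Fx := \sum_k c k * _ in fxE; set Fy := \sum_k c k * _ in fyE.
set Gx := \sum_k d k * _ in gxE; set Gy := \sum_k d k * _ in gyE.
exists (fx * (gy + Gy) + Fx * gy - (gx * (fy + Fy) + Gx * fy)), (Fx * Gy - Gx * Fy).
split; first by rewrite /minor fxE fyE gxE gyE; ring.
split.
  apply: (idealB idealI); apply: (idealD idealI);
    first [by apply: (idealMr idealI) | by apply: (idealMl idealI)].
rewrite sum_mul_minor; apply: (ideal_sum idealM) => a _; apply: (ideal_sum idealM) => b _.
apply/(idealMl idealM)/ideal_gen_mem/allpairsP.
by exists (F`_a, F`_b); split; rewrite ?mem_nth.
Qed.

Lemma wp_kahler p f : p \in D -> (1 < mult p)%N -> A f -> wp p f.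
Proof.
move=> Dp m_gt1 [g [h [-> [Ig Mh]]]]; have idealW := wp_pow_is_ideal (Q p.1) (R p.2) (mult p).
apply: (idealD idealW); first exact: Ig.
apply: (ideal_gen_min idealW) Mh => _ /allpairsP[[Fa Fb] /= [Fa_in Fb_in ->]].
have WF G : G \in F -> wp p G by move=> F_G; apply: (proj2 (F_gen G) (ideal_gen_mem F_G)).
have Wd G H : G \in F -> H \in F -> wp p (mderiv vX1 G * mderiv vY1 H).
  move=> F_G F_H; apply: (wp_pow_le (m := (mult p).-1 + (mult p).-1)); first lia.
  by apply: wp_powM; apply: wp_pow_mderiv; apply: WF.
by apply: (idealB idealW); apply: Wd.
Qed.

Definition simple_pts := [set p in D | mult p == 1%N].

Lemma IY_of_kahler_vanishing i j f : A f -> bihom (i, j) f ->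
  (forall p, p \in simple_pts -> f.@[pt p] = 0) -> I f.
Proof.
move=> Af homf f_P0 p Dp; have [m1|m_neq1] := eqVneq (mult p) 1%N.
  have Sp : p \in simple_pts by rewrite inE Dp m1.
  rewrite m1; apply: wp1_of_meval_eq0 homf (f_P0 _ Sp).
    exact: x0_coord_neq0.
  exact: y0_coord_neq0.
by apply: wp_kahler => //; have := m_gt0 Dp; lia.
Qed.

Lemma admissible_size_le i j s : admissible A I (i, j) s -> (size s <= #|simple_pts|)%N.
Proof.
move=> [sA indep_s]; rewrite leqNgt; apply/negP => lt_N_s.
pose M : 'M[K]_(size s, #|simple_pts|) := \matrix_(a, l) (s`_a).@[pt (enum_val l)].
have : row_free M.
  apply: inj_row_free => v vM0; apply/rowP => a; rewrite mxE; apply: indep_s.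
  have s_a (k : 'I_(size s)) : A s`_k /\ bihom (i, j) s`_k by apply/sA/mem_nth.
  apply: (@IY_of_kahler_vanishing i j).
  - by apply: (ideal_sum kahler_is_ideal) => k _; apply/(idealZ kahler_is_ideal)/(s_a k).1.
  - by apply: bihom_sum => k _; apply/bihomZ/(s_a k).2.
  move=> p Sp; have := congr1 (fun w : 'rV_#|simple_pts| => w 0 (enum_rank_in Sp p)) vM0.
  rewrite !mxE raddf_sum => vMp0; rewrite -[RHS]vMp0; apply: eq_bigr => k _ /=.
  by rewrite mevalZ !mxE enum_rankK_in.
by rewrite /row_free => /eqP rkM; move: (rank_leq_col M); rewrite rkM leqNgt lt_N_s.
Qed.

Definition kahler_separator_at p (dE : (nat * nat) * S) : Prop :=
  [/\ A dE.2, bihom dE.1 dE.2, dE.2.@[pt p] != 0 &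
      forall p', p' \in D -> p' != p -> dE.2.@[pt p'] = 0].

Lemma kahler_separator_exists p : p \in simple_pts -> exists dE, kahler_separator_at p dE.
Proof.
rewrite inE => /andP[Dp /eqP m1]; have [[a b] homW] := bihom_separator p.
have [q1_neq0 r1_neq0] := (x0_coord_neq0 Dp, y0_coord_neq0 Dp).
(* The factor X0 Y0 keeps both bidegree components positive, as bihom_minor needs. *)
set U := X0 K * Y0 K * separator p.
have homU : bihom (a.+1, b.+1) U.
  by apply: bihomM (bihomM bihomX0 bihomY0 erefl) homW _; rewrite /=; congr pair; lia.
have IU L : wp p L -> I (L * U).
  move=> WL; have -> : L * U = separator p * (L * (X0 K * Y0 K)) by rewrite /U; ring.
  by apply/IY_separatorM/(idealMr (wp_pow_is_ideal _ _ _)).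
have W_linX : wp p (linX (Q p.1)).
  by rewrite m1 -[linX _]mulr1 -(expr0 (linY (R p.2))) -[linX _]expr1; apply: wp_pow_monomial.
have W_linY : wp p (linY (R p.2)).
  by rewrite m1 -[linY _]mul1r -(expr0 (linX (Q p.1))) -[linY _]expr1; apply: wp_pow_monomial.
pose E := minor (linX (Q p.1) * U) (linY (R p.2) * U) * separator p.
pose d := ((a.+1 + a).+1 + a, (b + b.+1).+1 + b)%N.
have homE : bihom d E.
  have homf1 : bihom (a.+2, b.+1) (linX (Q p.1) * U).
    by apply: bihomM bihom_linX homU _; rewrite /= add1n add0n.
  have homf2 : bihom (a.+1, b.+2) (linY (R p.2) * U).
    by apply: bihomM bihom_linY homU _; rewrite /= add0n add1n.
  exact: bihomM (bihom_minor homf1 homf2) homW erefl.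
exists (d, E); split=> //=.
- exact/(idealMr kahler_is_ideal)/kahler_minor/IU/W_linY/IU.
- have U_neq0 : U.@[pt p] != 0.
    by rewrite !mevalM meval_X0 meval_Y0 !mulf_neq0 ?separator_meval_neq0.
  by rewrite mevalM meval_minor_lin !mulf_neq0 ?expf_neq0 ?separator_meval_neq0.
- by move=> p' Dp' neq; rewrite mevalM separator_meval_eq0 ?mulr0.
Qed.

Lemma kahler_separator_shift p d E i j : p \in D -> kahler_separator_at p (d, E) ->
  (d.1 <= i)%N -> (d.2 <= j)%N ->
  kahler_separator_at p ((i, j), X0 K ^+ (i - d.1) * Y0 K ^+ (j - d.2) * E).
Proof.
move=> Dp [AE homE E_neq0 E_eq0] le_i le_j; split=> //=.
- exact: (idealMl kahler_is_ideal _ AE).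
- apply: bihomM (bihomM (bihomXn bihomX0) (bihomXn bihomY0) erefl) homE _.
  by rewrite /= !muln0 !muln1 addn0 add0n !subnK.
- rewrite !mevalM !rmorphXn /= meval_X0 meval_Y0.
  by rewrite !mulf_neq0 ?expf_neq0 ?x0_coord_neq0 ?y0_coord_neq0.
- by move=> p' Dp' neq; rewrite mevalM E_eq0 ?mulr0.
Qed.

Lemma admissible_simple_large : exists N, forall i j, (N <= i)%N -> (N <= j)%N ->
  exists2 s, size s = #|simple_pts| & admissible A I (i, j) s.
Proof.
have [dE sep_dE] : exists dE : 'I_r * 'I_t -> (nat * nat) * S,
    forall p, p \in simple_pts -> kahler_separator_at p (dE p).
  apply: (fin_all_exists (P := fun p dE => p \in simple_pts -> kahler_separator_at p dE)) => p.
  have [/kahler_separator_exists[dE ?]|S'p] := boolP (p \in simple_pts).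
    by exists dE.
  by exists ((0, 0)%N, 0) => /= Sp; case/negP: S'p.
pose deg p := maxn (dE p).1.1 (dE p).1.2.
exists (\max_(p in simple_pts) deg p) => i j le_i le_j.
have [->|[p0 Sp0]] := set_0Vmem simple_pts.
  by exists [::]; rewrite ?cards0 //; split=> // c _ [].
have simple_D p : p \in simple_pts -> p \in D by rewrite inE => /andP[].
pose sep p := X0 K ^+ (i - (dE p).1.1) * Y0 K ^+ (j - (dE p).1.2) * (dE p).2.
have sep_ij p : p \in simple_pts -> kahler_separator_at p ((i, j), sep p).
  move=> Sp; have := @leq_bigmax_cond _ (fun p => p \in simple_pts) deg p Sp.
  rewrite geq_max => /andP[le1 le2].
  apply: kahler_separator_shift; rewrite ?simple_D // -?surjective_pairing.
  - exact: sep_dE.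
  - exact: leq_trans le1 le_i.
  - exact: leq_trans le2 le_j.
pose e := enum simple_pts; have e_simple k : (k < size e)%N -> nth p0 e k \in simple_pts.
  by move=> lt_k; rewrite -mem_enum mem_nth.
exists [seq sep p | p <- e]; first by rewrite size_map -cardE.
split=> [f /mapP[p]|]; first by rewrite mem_enum => Sp ->; have [] := sep_ij p Sp.
apply: (indep_mod_dual (v := fun k => pt (nth p0 e k))) => [k f|k l]; rewrite size_map => lt_k.
  by apply: IY_meval; rewrite simple_D ?e_simple.
move=> lt_l; rewrite (nth_map p0) //.
have [_ _] := sep_ij _ (e_simple l lt_l); rewrite /= => neq0 eq0.
have [->|neq] := eqVneq k l; first by rewrite neq0.
by rewrite eq0 ?eqxx //; [exact/simple_D/e_simple | rewrite nth_uniq ?enum_uniq].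
Qed.

Local Notation HF := (HF_kahler I F).

Lemma HF_is_qdim i j : is_qdim A I (i, j) (HF i j).
Proof.
have [n qdim_n] := is_qdim_exists (@admissible_size_le i j).
by rewrite /HF_kahler (qdim_eq qdim_n).
Qed.

Lemma HF_le_simple i j : (HF i j <= #|simple_pts|)%N.
Proof. by have /is_qdimP[[s <- adm] _] := HF_is_qdim i j; apply: admissible_size_le adm. Qed.

Lemma HF_eventually_simple :
  exists N, forall i j, (N <= i)%N -> (N <= j)%N -> HF i j = #|simple_pts|.
Proof.
have [N large] := admissible_simple_large; exists N => i j le_i le_j.
have [s sE adm] := large i j le_i le_j; have /is_qdimP[_ ub] := HF_is_qdim i j.
by apply/eqP; rewrite eqn_leq HF_le_simple -sE ub.
Qed.

Lemma HF_le_mul x e i j : bihom e x -> (forall f, bihom (i, j) f -> I (x * f) -> I f) ->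
  (HF i j <= HF (e.1 + i) (e.2 + j))%N.
Proof.
move=> homx x_reg; have /is_qdimP[[s <- [sA indep_s]] _] := HF_is_qdim i j.
have /is_qdimP[_ ub] := HF_is_qdim (e.1 + i) (e.2 + j).
rewrite -(size_map (fun f => x * f)); apply: ub; split.
  move=> _ /mapP[f /sA[Af homf] ->]; split; first exact: (idealMl kahler_is_ideal).
  exact: bihomM homx homf erefl.
by apply: indep_mod_mull x_reg _ indep_s => f /sA[].
Qed.

Lemma HF_le_succ_x i j : (HF i j <= HF i.+1 j)%N.
Proof. by apply: HF_le_mul bihomX0 _ => f _; apply: regular.1. Qed.

Lemma HF_le_succ_y i j : (HF i j <= HF i j.+1)%N.
Proof. by apply: HF_le_mul bihomY0 _ => f; apply: Y0_regular_bihom. Qed.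

Lemma HF_eq0 : (forall i j, HF i j = 0%N) <-> (forall p, p \in D -> (1 < mult p)%N).
Proof.
split=> [HF0 p Dp|fat i j].
  have [N HFN] := HF_eventually_simple; have := HFN N N (leqnn N) (leqnn N).
  rewrite HF0 => /esym/eqP; rewrite cards_eq0 => /eqP S0.
  have : p \notin simple_pts by rewrite S0 inE.
  by rewrite inE Dp /=; have := m_gt0 Dp; case: (mult p) => [|[|]].
apply/eqP; rewrite -leqn0 (leq_trans (HF_le_simple i j)) // leqn0 cards_eq0.
apply/eqP/setP => p; rewrite !inE; apply/negbTE/andP => -[Dp /eqP m1].
by have := fat p Dp; rewrite m1.
Qed.

End FatPoints.

Unset Implicit Arguments.

Theorem proposition6p2
  (K : fieldType) (HK : [pchar K] =i pred0)
  (r t : nat) (Q : 'I_r -> K * K) (R : 'I_t -> K * K)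
  (HQ : distinct_P1 Q) (HR : distinct_P1 R)
  (D : {set 'I_r * 'I_t}) (m : 'I_r -> 'I_t -> nat)
  (Hm : forall p, p \in D -> (1 <= m p.1 p.2)%N)
  (Hreg : regular_x0_y0 (in_IY Q R D m))
  (F : seq (S K))
  (HFhom : forall f, f \in F -> exists d, bihom d f)
  (HFgen : forall f, in_IY Q R D m f <-> ideal_gen F f) :
  let HF := HF_kahler (in_IY Q R D m) F in
  (forall i j, (HF i j <= HF i.+1 j)%N /\ (HF i j <= HF i j.+1)%N) /\
  ((forall i j, HF i j = 0%N) <-> (forall p, p \in D -> (2 <= m p.1 p.2)%N)) /\
  (exists N, forall i j, (N <= i)%N -> (N <= j)%N ->
     HF i j = #|[set p in D | m p.1 p.2 == 1%N]|).
Proof.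
move=> HF; split; last split.
- move=> i j; split.
  + exact: (HF_le_succ_x HQ HR Hm Hreg HFgen).
  + exact: (HF_le_succ_y HQ HR Hm Hreg HFgen).
- exact: (HF_eq0 HQ HR Hm Hreg HFgen).
- exact: (HF_eventually_simple HQ HR Hm Hreg HFgen).
Qed.
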